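(* Let $m \ge 3$ and $l_1\le\cdots\le l_m$ be natural numbers. Then $(B(l_1,\ldots,l_m))^2$ is equitably $k$-choosable for every $k \geq m+1$.
   Context: All graphs are finite and simple. For $m,l_1,\ldots,l_m\in\mathbb{N}$ with $l_1\le\cdots\le l_m$, $B(l_1,\ldots,l_m)$ is the graph with vertex set $\{u\}\cup\{v_{i,j}: i\in[m], j\in[l_i]\}$ in which, for each $i\in[m]$, consecutive vertices in the sequence $u, v_{i,1},\ldots,v_{i,l_i}$ are adjacent (and there are no other edges); i.e., a subdivision of $K_{1,m}$ with paths of lengths $l_1,\ldots,l_m$. For a graph $H$, $H^2$ has vertex set $V(H)$ with two vertices adjacent iff their distance in $H$ is 1 or 2. A $k$-assignment $L$ for a graph $G$ assigns to each vertex $v$ a set $L(v)$ of exactly $k$ colors. An equitable $L$-coloring of $G$ is a proper coloring $f$ with $f(v)\in L(v)$ for all $v$ such that no color is used on more than $\lceil |V(G)|/k\rceil$ vertices. $G$ is equitably $k$-choosable if it has an equitable $L$-coloring for every $k$-assignment $L$. *)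

From mathcomp Require Import all_boot.
Set Implicit Arguments. Unset Strict Implicit. Unset Printing Implicit Defensive.

(* Vertices of the spider B(l_1,...,l_m): None is the centre u, and
   Some (Tagged i j) (with j : 'I_(l i)) is v_{i, j+1}. *)
Definition spider_vertex (m : nat) (l : 'I_m -> nat) : finType :=
  option {i : 'I_m & 'I_(l i)}.

Definition spider_edge1 (m : nat) (l : 'I_m -> nat)
  (x y : spider_vertex l) : bool :=
  match x, y with
  | None, Some p => val (tagged p) == 0
  | Some p, Some q => (tag p == tag q) && ((val (tagged p)).+1 == val (tagged q))
  | _, _ => false
  end.

Definition spider_edge (m : nat) (l : 'I_m -> nat) : rel (spider_vertex l) :=
  fun x y => spider_edge1 x y || spider_edge1 y x.

Arguments spider_edge : clear implicits.
Arguments spider_edge m l x y : clear implicits.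

Definition graph_square (V : finType) (e : rel V) : rel V :=
  fun x y => (x != y) && (e x y || [exists z, e x z && e z y]).

Definition ceil_div (n k : nat) : nat := (n + k.-1) %/ k.

Definition k_assignment (V : finType) (k : nat) (L : V -> seq nat) : Prop :=
  forall v, uniq (L v) /\ size (L v) = k.

Definition equitable_L_coloring (V : finType) (e : rel V) (k : nat)
  (L : V -> seq nat) (f : V -> nat) : Prop :=
  [/\ (forall x y, e x y -> f x <> f y),
      (forall v, f v \in L v) &
      (forall c, #|[set v | f v == c]| <= ceil_div #|V| k)].

Definition equitably_k_choosable (V : finType) (e : rel V) (k : nat) : Prop :=
  forall L : V -> seq nat, k_assignment k L ->
    exists f : V -> nat, equitable_L_coloring e k L f.

From mathcomp Require Import all_boot perm zify.
Set Implicit Arguments. Unset Strict Implicit. Unset Printing Implicit Defensive.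

(* The proof is a greedy colouring along a carefully chosen vertex order.
   - A general lemma (block greedy): order the vertices by an injective key
     and cut them into t <= ceil(|V|/k) blocks; if every vertex has fewer
     than k "forbidden" vertices (earlier ones that lie in its block or are
     adjacent to it), colouring greedily along the key gives an equitable
     L-colouring, since each colour class meets each block at most once.
   - Equitable choosability is invariant under graph isomorphism, and so is
     the square; hence the legs of the spider may be permuted freely.
   - For the spider (legs numbered 0, ..., m-1) we list leg 0 inwards, the
     centre, then legs 1, ..., m-1 outwards, and cut this list into blocks
     of k consecutive vertices.  Only the first two vertices of the legs
     2, ..., m-1 have square-neighbours far behind them (back_nbrs).
     Inside a block we colour the first vertices of those legs first, then
     their second vertices and the vertices in the first two places of the
     block, then the rest.  A case analysis on this class bounds every
     forbidden set by k - 1.  One case needs a vertex of the block coloured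
     after a second vertex x; it exists when the legs are sorted and k >= 5,
     or, for k = 4 and m = 3, when the last leg is suitably chosen. *)

Lemma card_le_size_inj (V : finType) (g : V -> nat) (A : {set V}) (S : seq nat) :
  injective g -> {in A, forall y, g y \in S} -> #|A| <= size S.
Proof.
move=> g_inj gA; rewrite cardE -(size_map g).
apply: uniq_leq_size; first by rewrite (map_inj_uniq g_inj) enum_uniq.
by move=> q /mapP [y]; rewrite mem_enum => yA ->; apply: gA.
Qed.

Lemma free_colour (s t : seq nat) : uniq s -> size t < size s ->
  exists2 c, c \in s & c \notin t.
Proof.
move=> s_uniq lt_ts; apply/allPn; apply/negP => /allP s_sub.
by move: (uniq_leq_size s_uniq s_sub); rewrite leqNgt lt_ts.
Qed.

Section BlockGreedy.
Variables (V : finType) (e : rel V) (k : nat) (key block : V -> nat) (t : nat).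
Hypotheses (e_sym : forall x y, e x y -> e y x) (e_irr : forall x, ~~ e x x).
Hypotheses (key_inj : injective key) (block_lt : forall x, block x < t).
Hypothesis t_le : t <= ceil_div #|V| k.

Definition forb (x : V) : {set V} :=
  [set y | (key y < key x) && ((block y == block x) || e x y)].

Hypothesis forb_small : forall x, #|forb x| < k.

Section Colouring.
Variable L : V -> seq nat.
Hypothesis L_ok : k_assignment k L.

Definition good_below (N : nat) (f : V -> nat) :=
  forall x, key x < N -> f x \in L x /\ forall y, y \in forb x -> f x != f y.

(* Colour the vertices one by one in key order: x has k colours in its list
   and fewer than k forbidden vertices, so one colour remains free. *)
Lemma good_below_exists N : exists f, good_below N f.
Proof.
elim: N => [|N [f f_good]]; first by exists (fun=> 0).
case: (pickP (fun x => key x == N)) => [x /eqP kx|no_x]; last first.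
  exists f => z kz; apply: f_good.
  by move: (no_x z) => /= /negbT; lia.
have [L_uniq L_size] := L_ok x.
have forb_lt : size [seq f y | y <- enum (forb x)] < size (L x).
  by rewrite size_map -cardE L_size; exact: forb_small.
have [c cL c_free] := free_colour L_uniq forb_lt.
have not_x y : key y < N -> (y == x) = false.
  by move=> ky; apply/eqP => yx; move: ky; rewrite yx kx ltnn.
have forb_below z y : y \in forb z -> key y < key z by rewrite inE => /andP [].
exists (fun z => if z == x then c else f z) => z kz.
case: (eqVneq z x) => [->|zx].
  split=> // y yF; have := forb_below x y yF; rewrite kx => /not_x ->.
  by apply: contraNneq c_free => ->; apply/map_f; rewrite mem_enum.
have kzN : key z < N.
  have : key z != key x by apply: contraNneq zx => /key_inj ->.
  by rewrite kx; lia.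
have [fz_L fz_forb] := f_good z kzN.
split=> // y yF; rewrite not_x ?fz_forb //.
by apply: ltn_trans (forb_below z y yF) kzN.
Qed.

(* A greedy colouring never repeats a colour inside a block. *)
Lemma greedy_colouring : exists f, equitable_L_coloring e k L f.
Proof.
have [f f_good] := good_below_exists (\max_(x : V) key x).+1.
have {}f_good x : f x \in L x /\ forall y, y \in forb x -> f x != f y.
  by apply: f_good; rewrite ltnS; apply: leq_bigmax.
have f_sep x y : key y < key x -> (block y == block x) || e x y -> f x != f y.
  by move=> kyx bxy; apply: (f_good x).2; rewrite inE kyx.
exists f; split; last 2 first.
- by move=> v; case: (f_good v).
- move=> c; pose b (v : V) : 'I_t := Ordinal (block_lt v).
  rewrite -(@card_in_imset _ _ b); first by apply: leq_trans (max_card _) _; rewrite card_ord.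
  move=> x y; rewrite !inE => /eqP fx /eqP fy /(congr1 val) /= bxy.
  apply: key_inj; apply/eqP; apply: contraT; rewrite neq_ltn => /orP [] lt.
  + by move: (f_sep y x lt); rewrite bxy eqxx fx fy eqxx => /(_ isT).
  + by move: (f_sep x y lt); rewrite bxy eqxx fx fy eqxx => /(_ isT).
move=> x y exy; apply/eqP.
have : key x != key y by apply: contraTneq exy => /key_inj ->; apply: e_irr.
rewrite neq_ltn => /orP [] lt; last by apply: f_sep; rewrite // exy orbT.
by rewrite eq_sym; apply: f_sep; rewrite // e_sym ?orbT.
Qed.

End Colouring.

Lemma block_greedy_choosable : equitably_k_choosable e k.
Proof. by move=> L L_ok; apply: greedy_colouring. Qed.

End BlockGreedy.

Section Square.
Variables (V : finType) (e : rel V).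

Lemma square_sym : symmetric e -> forall x y, graph_square e x y -> graph_square e y x.
Proof.
move=> e_sym x y /andP [xy /orP [exy|/existsP [z /andP [xz zy]]]].
  by rewrite /graph_square eq_sym xy e_sym exy.
rewrite /graph_square eq_sym xy /=; apply/orP; right.
by apply/existsP; exists z; rewrite e_sym zy e_sym xz.
Qed.

Lemma square_irr x : ~~ graph_square e x x.
Proof. by rewrite /graph_square eqxx. Qed.

End Square.

Section Isomorphism.
Variables (V W : finType) (eV : rel V) (eW : rel W) (phi : W -> V).
Hypothesis phi_bij : bijective phi.
Hypothesis phi_edge : forall a b, eV (phi a) (phi b) = eW a b.

Lemma iso_square a b : graph_square eV (phi a) (phi b) = graph_square eW a b.
Proof.
have [g phiK gK] := phi_bij.
rewrite /graph_square (inj_eq (bij_inj phi_bij)) phi_edge; congr (_ && (_ || _)).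
apply/existsP/existsP => [[z]|[z]]; last by exists (phi z); rewrite !phi_edge.
by rewrite -(gK z) !phi_edge; exists (g z).
Qed.

Lemma iso_choosable k : equitably_k_choosable eW k -> equitably_k_choosable eV k.
Proof.
move=> chW L L_ok; have [g phiK gK] := phi_bij.
have [f [f_proper f_L f_bound]] := chW (L \o phi) (fun w => L_ok (phi w)).
exists (f \o g); split=> [x y|v|c] /=.
- by rewrite -{1}(gK x) -{1}(gK y) phi_edge; apply: f_proper.
- by rewrite -{2}(gK v); apply: f_L.
have -> : [set v | f (g v) == c] = phi @: [set w | f w == c].
  apply/setP => v; rewrite inE; apply/idP/imsetP => [fc|[w w_c ->]].
  + by exists (g v); rewrite ?inE ?gK.
  + by rewrite phiK; rewrite inE in w_c.
by rewrite card_imset -?(bij_eq_card phi_bij); [apply: f_bound | apply: bij_inj].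
Qed.

End Isomorphism.

Section SpiderOrder.
Variables (m : nat) (l : 'I_m -> nat).
Hypothesis l_pos : forall i, 0 < l i.

Local Notation V := (spider_vertex l).
Local Notation leg_vertex i j := (Some (Tagged (fun i => 'I_(l i)) j)).

Definition psum (a : nat) : nat := \sum_(r < m | r < a) l r.

Definition pcentre := psum 1.
Definition nverts := (psum m).+1.

(* The vertex order: leg 0 read inwards occupies positions 0, ..., l_0 - 1,
   the centre comes next, then legs 1, ..., m - 1 are read outwards. *)
Definition pos (x : V) : nat :=
  match x with
  | None => pcentre
  | Some p => if val (tag p) == 0 then pcentre.-1 - val (tagged p)
              else (psum (tag p)).+1 + val (tagged p)
  end.

Lemma psum0 : psum 0 = 0.
Proof. by rewrite /psum big_pred0. Qed.

Lemma psumS (i : 'I_m) : psum i.+1 = psum i + l i.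
Proof.
rewrite /psum (bigD1 i) //= addnC; congr (_ + _).
by apply: eq_bigl => r; rewrite ltnS -val_eqE /=; case: ltngtP.
Qed.

Lemma psum_mono a b : a <= b -> psum a <= psum b.
Proof.
move=> ab; rewrite /psum [X in _ <= X]big_mkcond [X in X <= _]big_mkcond.
by apply: leq_sum => r _; case: ifP => // ra; rewrite (leq_trans ra ab).
Qed.

Lemma psum_sat a : m <= a -> psum a = psum m.
Proof.
by move=> ma; apply: eq_bigl => r; rewrite (leq_trans (ltn_ord r) ma) ltn_ord.
Qed.

Lemma psum_total : psum m = \sum_i l i.
Proof. by apply: eq_bigl => r; rewrite ltn_ord. Qed.

Lemma card_spider : #|{: V}| = nverts.
Proof.
rewrite card_option card_tagged /nverts psum_total; congr _.+1.
by rewrite sumnE big_map big_enum /=; apply: eq_bigr => i _; exact: card_ord.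
Qed.

Lemma pcentre_leg0 (i : 'I_m) : val i = 0 -> pcentre = l i.
Proof. by move=> i0; rewrite /pcentre -i0 psumS i0 psum0. Qed.

Lemma pcentre_le : pcentre <= psum m.
Proof.
case: (posnP m) => [m0|m_gt0]; last exact: psum_mono.
by rewrite /pcentre psum_sat ?m0.
Qed.

Lemma psum_short c : (forall r : 'I_m, r < c -> l r <= 2) -> psum c <= 2 * c.
Proof.
elim: c => [|c IH] short; first by rewrite psum0.
have {}IH := IH (fun r rc => short r (ltnW rc)).
case: (ltnP c m) => cm; last by rewrite psum_sat ?(leq_trans cm) // -(psum_sat cm); lia.
by rewrite (psumS (Ordinal cm)) /=; have := short (Ordinal cm) (ltnSn c); lia.
Qed.

Lemma psum_leg (i : 'I_m) (j : 'I_(l i)) : psum i + j < psum i.+1.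
Proof. by rewrite psumS ltn_add2l. Qed.

Lemma pos_lt x : pos x < nverts.
Proof.
rewrite /nverts ltnS; case: x => [[i j]|] /=; last exact: pcentre_le.
case: ifP => _; first by have := pcentre_le; lia.
by have := psum_leg j; have := psum_mono (ltn_ord i); lia.
Qed.

Lemma pos_leg0 (i : 'I_m) (j : 'I_(l i)) : val i = 0 ->
  pos (leg_vertex i j) = pcentre.-1 - j /\ pcentre.-1 - j < pcentre.
Proof. by move=> i0 /=; rewrite i0 eqxx; have := l_pos i; rewrite (pcentre_leg0 i0); lia. Qed.

Lemma pos_legS (i : 'I_m) (j : 'I_(l i)) : val i != 0 ->
  pos (leg_vertex i j) = (psum i).+1 + j /\ pcentre < (psum i).+1 + j.
Proof.
move=> i0 /=; rewrite (negPf i0); split=> //.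
have : 0 < i by rewrite lt0n.
by move=> /psum_mono; rewrite /pcentre; lia.
Qed.

Lemma pos_centre : pos None = pcentre. Proof. by []. Qed.

Arguments pos : simpl never.

Lemma pos_inj : injective pos.
Proof.
have legS_lt (i i' : 'I_m) (j : 'I_(l i)) (j' : 'I_(l i')) :
    i < i' -> (psum i).+1 + j < (psum i').+1 + j'.
  by move=> ii'; have := psum_leg j; have := psum_mono ii'; lia.
have same_leg (i : 'I_m) (j j' : 'I_(l i)) : j = j' :> nat -> leg_vertex i j = leg_vertex i j'.
  by move=> /val_inj ->.
move=> [[i j]|] [[i' j']|] //; last first.
- by case: (eqVneq (nat_of_ord i') 0) => i0;
    [have [-> ?] := pos_leg0 j' i0 | have [-> ?] := pos_legS j' i0]; rewrite pos_centre; lia.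
- by case: (eqVneq (nat_of_ord i) 0) => i0;
    [have [-> ?] := pos_leg0 j i0 | have [-> ?] := pos_legS j i0]; rewrite pos_centre; lia.
case: (eqVneq (nat_of_ord i) 0) => i0; case: (eqVneq (nat_of_ord i') 0) => i0'.
- have ii' : i = i' by apply: ord_inj; rewrite i0 i0'.
  subst i'; have [-> _] := pos_leg0 j i0; have [-> _] := pos_leg0 j' i0 => E.
  by apply: same_leg; have := ltn_ord j; have := ltn_ord j'; have := pcentre_leg0 i0; lia.
- by have [-> ?] := pos_leg0 j i0; have [-> ?] := pos_legS j' i0'; lia.
- by have [-> ?] := pos_legS j i0; have [-> ?] := pos_leg0 j' i0'; lia.
have [-> _] := pos_legS j i0; have [-> _] := pos_legS j' i0'.
case: (ltngtP i i') => ii' E.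
- by have := legS_lt i i' j j' ii'; lia.
- by have := legS_lt i' i j' j ii'; lia.
have e : i = i' by apply: val_inj.
by subst i'; apply: same_leg; lia.
Qed.

Local Notation G := (graph_square (spider_edge m l)).

Definition adj (x y : V) : bool :=
  match x, y with
  | None, None => false
  | None, Some q => val (tagged q) == 0
  | Some p, None => val (tagged p) == 0
  | Some p, Some q =>
      (tag p == tag q) && ((val (tagged p)).+1 == val (tagged q)) ||
      (tag p == tag q) && ((val (tagged q)).+1 == val (tagged p))
  end.

Definition near (x y : V) : bool :=
  match x, y with
  | None, None => false
  | None, Some q => val (tagged q) <= 1
  | Some p, None => val (tagged p) <= 1
  | Some p, Some q =>
      if tag p == tag q then (val (tagged p) <= (val (tagged q)).+2) &&
                             (val (tagged q) <= (val (tagged p)).+2)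
      else (val (tagged p) == 0) && (val (tagged q) == 0)
  end.

Lemma spider_edge_adj x y : spider_edge m l x y -> adj x y.
Proof.
by case: x => [[i j]|]; case: y => [[i' j']|];
  rewrite /spider_edge /spider_edge1 /= ?orbF // eq_sym.
Qed.

Local Ltac split_arith := repeat (match goal with
  | |- is_true (_ || _) -> _ => case/orP
  | |- is_true (_ && _) -> _ => case/andP
  | |- is_true (@eq_op _ (nat_of_ord _) _) -> _ => move/eqP
  | |- is_true (@eq_op _ (S _) _) -> _ => move/eqP
  | |- is_true (@eq_op _ _ 0) -> _ => move/eqP
  | |- is_true (_ == _) -> _ => move=> _
  | |- is_true false -> _ => by []
  | |- _ -> _ => intro
  end); try (rewrite /=; lia).

Lemma square_near x y : G x y -> near x y.
Proof.
move=> /andP [xy /orP [/spider_edge_adj E | /existsP [z]]].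
- move: xy E; case: x => [[i j]|]; case: y => [[i' j']|] //=; try by split_arith.
  by case: (i =P i') => [E|ne]; [subst i' | ]; rewrite /=; split_arith.
- move=> /andP [/spider_edge_adj E1 /spider_edge_adj E2].
  move: xy E1 E2; case: x => [[i j]|]; case: y => [[i' j']|] //=;
  case: z => [[i'' j'']|] //=;
  try (case: (i =P i'') => [E|ne]; [subst i'' | ]; rewrite /=);
  try (case: (i' =P i'') => [E|ne]; [subst i'' | ]; rewrite /=);
  try (case: (i =P i') => [E|ne]; [subst i' | ]; rewrite /=);
  split_arith.
Qed.

Lemma spider_edge_sym : symmetric (spider_edge m l).
Proof. by move=> x y; apply: orbC. Qed.

(* The first vertex of a leg i >= 2 (0-based) and the second one: the only
   vertices with square-neighbours far behind them in the order. *)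
Definition leg_root (x : V) : bool :=
  if x is Some p then (1 < tag p) && (val (tagged p) == 0) else false.
Definition leg_second (x : V) : bool :=
  if x is Some p then (1 < tag p) && (val (tagged p) == 1) else false.

(* Positions of all the square-neighbours that precede x in the order. *)
Definition back_nbrs (x : V) : seq nat :=
  if x is Some p then
    if leg_root x then
      pcentre :: pcentre.-1 :: [seq (psum r).+1 | r <- iota 1 (tag p).-1]
    else if leg_second x then [:: (pos x).-1; pcentre]
    else [:: (pos x).-1; (pos x).-2]
  else [:: (pos x).-1; (pos x).-2].

Lemma back_nbrs_plain x : ~~ leg_root x -> ~~ leg_second x ->
  back_nbrs x = [:: (pos x).-1; (pos x).-2].
Proof. by case: x => [[i j]|] //= /negPf r /negPf s; rewrite /back_nbrs r s. Qed.

Lemma leg_root_inv x : leg_root x -> exists i : 'I_m, [/\ 1 < i, pos x = (psum i).+1 &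
  back_nbrs x = pcentre :: pcentre.-1 :: [seq (psum r).+1 | r <- iota 1 i.-1]].
Proof.
case: x => [[i j]|] //= /andP [i1 /eqP j0]; exists i; split=> //.
- have i0 : nat_of_ord i != 0 by move: i1; lia.
  by have [-> _] := pos_legS j i0; rewrite j0 addn0.
- by rewrite /back_nbrs /leg_root /= i1 j0.
Qed.

Lemma leg_second_inv x : leg_second x -> exists i : 'I_m, [/\ 1 < i, pos x = (psum i).+2 &
  back_nbrs x = [:: (pos x).-1; pcentre]].
Proof.
case: x => [[i j]|] //= /andP [i1 /eqP j1]; exists i; split=> //.
- have i0 : nat_of_ord i != 0 by move: i1; lia.
  by have [-> _] := pos_legS j i0; rewrite j1 addn1.
- by rewrite /back_nbrs /leg_root /leg_second /= i1 j1.
Qed.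

Lemma back_nbr_same_leg (i : 'I_m) (j j' : 'I_(l i)) :
  j <= j'.+2 -> j' <= j.+2 -> pos (leg_vertex i j') < pos (leg_vertex i j) ->
  pos (leg_vertex i j') \in back_nbrs (leg_vertex i j).
Proof.
case: (eqVneq (nat_of_ord i) 0) => i0 jj' j'j.
  have [-> _] := pos_leg0 j i0; have [-> _] := pos_leg0 j' i0.
  rewrite back_nbrs_plain /leg_root /leg_second /= ?i0 //.
  have [-> _] := pos_leg0 j i0; have := pcentre_leg0 i0; have := ltn_ord j'.
  by rewrite !inE; lia.
have [-> _] := pos_legS j i0; have [-> _] := pos_legS j' i0 => lt_j'j.
rewrite /back_nbrs /leg_root /leg_second /=.
case: (ltnP 1 i) => i1 /=; last by have [-> _] := pos_legS j i0; rewrite !inE; lia.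
case: (eqVneq (nat_of_ord j) 0) => j0 /=; first by exfalso; lia.
by case: (eqVneq (nat_of_ord j) 1) => j1 /=; have [-> _] := pos_legS j i0; rewrite !inE; lia.
Qed.

Lemma back_nbr_other_legs (i i' : 'I_m) (j : 'I_(l i)) (j' : 'I_(l i')) :
  i != i' -> j = 0 :> nat -> j' = 0 :> nat -> pos (leg_vertex i' j') < pos (leg_vertex i j) ->
  pos (leg_vertex i' j') \in back_nbrs (leg_vertex i j).
Proof.
move=> ii' j0 j'0.
have lt_legs (a b : 'I_m) (ja : 'I_(l a)) : a < b -> (psum a).+1 + ja < (psum b).+1.
  by move=> ab; have := psum_leg ja; have := psum_mono ab; lia.
case: (eqVneq (nat_of_ord i) 0) => i0.
  case: (eqVneq (nat_of_ord i') 0) => i0'; first by case/eqP: ii'; apply: ord_inj; rewrite i0 i0'.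
  by have [-> ?] := pos_leg0 j i0; have [-> ?] := pos_legS j' i0'; lia.
have [-> _] := pos_legS j i0; rewrite /back_nbrs /leg_root /= j0 eqxx andbT.
case: (eqVneq (nat_of_ord i') 0) => i0'.
  have [-> _] := pos_leg0 j' i0'; rewrite j'0 subn0 => _.
  case: (ltnP 1 i) => i1 /=; rewrite !inE ?eqxx ?orbT //.
  have [-> _] := pos_legS j i0.
  have -> : psum i = pcentre by rewrite /pcentre; congr psum; lia.
  lia.
have [-> _] := pos_legS j' i0'; rewrite j'0 !addn0 => lt_ii.
have i'i : i' < i.
  rewrite ltnNge; apply/negP => le_ii'; have := lt_legs i i' j.
  by rewrite ltn_neqAle le_ii' andbT (inj_eq val_inj) ii' => /(_ isT); lia.
have i1 : 1 < i by move: i0'; lia.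
rewrite i1 !inE; apply/orP; right; apply/orP; right.
by apply: map_f; rewrite mem_iota; move: i0'; lia.
Qed.

Lemma back_nbr x y : G x y -> pos y < pos x -> pos y \in back_nbrs x.
Proof.
move=> /square_near; case: x => [[i j]|]; case: y => [[i' j']|] //=.
- case: (i =P i') => [E|ne]; [subst i' | ].
  + by rewrite ?eqxx => /andP [jj' j'j]; apply: back_nbr_same_leg.
  + move=> /andP [/eqP j0 /eqP j'0]; apply: back_nbr_other_legs => //.
    by apply/eqP.
- case: (eqVneq (nat_of_ord i) 0) => i0.
    by have [-> ?] := pos_leg0 j i0; rewrite pos_centre; lia.
  rewrite /back_nbrs /leg_root /leg_second /=.
  have [-> ?] := pos_legS j i0; rewrite pos_centre => j1 _.
  case: (ltnP 1 i) => i1 /=.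
  + case: (eqVneq (nat_of_ord j) 0) => j0 /=; first by rewrite inE eqxx.
    have -> : nat_of_ord j == 1 by lia.
    by rewrite !inE eqxx orbT.
  + have -> : psum i = pcentre by rewrite /pcentre; congr psum; lia.
    by rewrite !inE; lia.
- case: (eqVneq (nat_of_ord i') 0) => i0.
    by have [-> ?] := pos_leg0 j' i0; rewrite pos_centre !inE; have := pcentre_leg0 i0; lia.
  by have [-> ?] := pos_legS j' i0; rewrite pos_centre; lia.
Qed.

Section Blocks.
Variable k : nat.
Hypothesis m_lt_k : m < k.

(* The legs are sorted when the blocks have at least five vertices; when
   they have four, there are three legs and position (psum 2).+1, the start
   of the last leg, is not the third place of a block. *)
Hypothesis leg_order :
  (4 < k /\ forall i j : 'I_m, i <= j -> l i <= l j) \/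
  (k = 4 /\ m = 3 /\ (psum 2).+1 %% 4 != 2).

Let k_ge4 : 4 <= k.
Proof. by case: leg_order => [[]|[->]]; lia. Qed.

Let k_gt0 : 0 < k. Proof. by lia. Qed.

Definition block (x : V) := pos x %/ k.

Definition cls (x : V) :=
  if leg_root x then 0 else if leg_second x || (pos x %% k < 2) then 1 else 2.

Definition key (x : V) := (block x * 3 + cls x) * nverts + pos x.

Lemma cls_le x : cls x <= 2.
Proof. by rewrite /cls; case: ifP => //; case: ifP. Qed.

Lemma cls0 y : cls y = 0 -> leg_root y.
Proof. by rewrite /cls; case: ifP => //; case: ifP. Qed.

Lemma key_inj : injective key.
Proof.
move=> x y /(congr1 (modn^~ nverts)).
by rewrite /key !modnMDl !modn_small ?pos_lt //; apply: pos_inj.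
Qed.

Lemma lex_lt a b p q N : p < N -> q < N -> a * N + p < b * N + q ->
  a < b \/ (a = b /\ p < q).
Proof.
move=> pN qN; case: (ltngtP a b) => ab lt; first by left.
- have : b.+1 * N <= a * N by rewrite leq_mul2r ab orbT.
  by rewrite mulSn; lia.
- by right; split=> //; move: lt; rewrite ab; lia.
Qed.

Lemma key_lt_cases x y : key y < key x ->
  block y < block x \/
  (block y = block x /\ (cls y < cls x \/ (cls y = cls x /\ pos y < pos x))).
Proof.
move=> /(lex_lt (pos_lt y) (pos_lt x)) [lt|[eq lt]];
  by have := cls_le x; have := cls_le y; lia.
Qed.

Lemma key_lt_same_block x w : block w = block x ->
  cls x < cls w \/ (cls x = cls w /\ pos x < pos w) -> key x < key w.
Proof.
move=> bw [lt|[eq lt]]; rewrite /key bw; last by rewrite eq; lia.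
have : (block x * 3 + cls x).+1 * nverts <= (block x * 3 + cls w) * nverts.
  by rewrite leq_mul2r; apply/orP; right; lia.
by have := pos_lt x; rewrite mulSn; lia.
Qed.

Lemma block_range x : block x * k <= pos x < block x * k + k.
Proof. by rewrite /block {2 3}(divn_eq (pos x) k) leq_addr /= ltn_add2l ltn_pmod. Qed.

Lemma pos_offset x : pos x = block x * k + pos x %% k.
Proof. by rewrite /block {1}(divn_eq (pos x) k). Qed.

Lemma offset_eq x : pos x %% k = pos x - block x * k.
Proof. by rewrite {2}pos_offset addKn. Qed.

Lemma earlier_block x y : block y < block x -> pos y < block x * k.
Proof. by rewrite /block ltn_divLR. Qed.

Lemma block_of_pos x w : block x * k <= pos w < block x * k + k -> block w = block x.
Proof.
move=> /andP [lo hi]; rewrite {1}/block.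
have -> : pos w = block x * k + (pos w - block x * k) by lia.
by rewrite divnMDl // divn_small ?addn0 //; lia.
Qed.

Lemma block_bound x : block x < ceil_div nverts k.
Proof.
rewrite /block /ceil_div.
have -> : nverts + k.-1 = 1 * k + nverts.-1 by rewrite /nverts; lia.
rewrite divnMDl // add1n ltnS leq_div2r //.
by have := pos_lt x; lia.
Qed.

Local Notation F x := (forb G key block x).

Lemma forb_cases x y : y \in F x ->
  (block y = block x /\ (cls y < cls x \/ (cls y = cls x /\ pos y < pos x))) \/
  (block y < block x /\ pos y \in back_nbrs x).
Proof.
rewrite inE => /andP [kl /orP [/eqP b | ex]].
  by have [lt|same] := key_lt_cases kl; [move: lt; rewrite b ltnn | left].
have [lt|same] := key_lt_cases kl; last by left.
right; split=> //; apply: back_nbr => //.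
by have := earlier_block lt; have := block_range x; lia.
Qed.

Lemma forb_neq x y : y \in F x -> pos y != pos x.
Proof.
by rewrite inE (inj_eq pos_inj) => /andP [kl _]; apply/eqP => E; move: kl; rewrite E ltnn.
Qed.

Lemma iota_block_rem x y : block y = block x -> pos y != pos x ->
  pos y \in rem (pos x) (iota (block x * k) k).
Proof.
move=> b yx; rewrite (mem_rem_uniq _ (iota_uniq _ _)) inE yx mem_iota /=.
by have := block_range y; rewrite b.
Qed.

Lemma size_iota_block_rem x : size (rem (pos x) (iota (block x * k) k)) = k.-1.
Proof. by rewrite size_rem ?size_iota // mem_iota block_range. Qed.

(* Leg roots: all forbidden vertices are listed by back_nbrs x. *)
Lemma forb_root x : leg_root x -> #|F x| < k.
Proof.
move=> x_root; apply: leq_ltn_trans m_lt_k.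
have [i [i1 px bx]] := leg_root_inv x_root.
apply: (@leq_trans (size (back_nbrs x))); last first.
  by rewrite bx /= size_map size_iota; have := ltn_ord i; lia.
apply: (card_le_size_inj pos_inj) => y /forb_cases [[_ c]|[_ //]].
rewrite /cls x_root in c; case: c => [//|[/cls0 y_root lt_yx]].
have [i' [i1' py _]] := leg_root_inv y_root.
rewrite bx !inE py; apply/orP; right; apply/orP; right.
have i'i : i' < i.
  by rewrite ltnNge; apply/negP => /psum_mono; move: lt_yx; rewrite px py; lia.
by apply: map_f; rewrite mem_iota; lia.
Qed.

(* Vertices in the first two places of their block (that are not roots):
   the roots of the block and the two back-neighbours. *)
Lemma forb_low x : ~~ leg_root x -> pos x %% k < 2 -> #|F x| < k.
Proof.
move=> x_nroot low; have cx : cls x = 1 by rewrite /cls (negPf x_nroot) low orbT.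
have [a bx] : exists a, back_nbrs x = [:: (pos x).-1; a].
  case: (boolP (leg_second x)) => [/leg_second_inv [i [_ _ ->]]|x_nsec].
    by exists pcentre.
  by rewrite back_nbrs_plain //; eexists.
pose roots := [seq (psum r).+1 | r <- iota 2 (m - 2)].
apply: (@leq_ltn_trans (size (roots ++ back_nbrs x))).
  apply: (card_le_size_inj pos_inj) => y /forb_cases [[b c]|[_ pE]];
    last by rewrite mem_cat pE orbT.
  rewrite cx in c; case: c => [c|[c lt]].
    have /cls0 /leg_root_inv [i [i1 -> _]] : cls y = 0 by lia.
    by rewrite mem_cat map_f // mem_iota; have := ltn_ord i; lia.
  rewrite mem_cat bx !inE; apply/orP; right; apply/orP; left; apply/eqP.
  by have := block_range y; have := pos_offset x; rewrite b; lia.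
by rewrite size_cat size_map size_iota bx /=; lia.
Qed.

(* When every back-neighbour lies in the block, the forbidden vertices are
   among the other k - 1 positions of the block. *)
Lemma forb_within x : {in back_nbrs x, forall q, block x * k <= q} -> #|F x| < k.
Proof.
move=> inside.
apply: (@leq_ltn_trans (size (rem (pos x) (iota (block x * k) k)))); last first.
  by rewrite size_iota_block_rem; lia.
apply: (card_le_size_inj pos_inj) => y /[dup] yF /forb_cases [[b _]|[lt pE]].
  by apply: iota_block_rem b (forb_neq yF).
by have := inside _ pE; have := earlier_block lt; lia.
Qed.

(* Leg seconds away from the block start: the predecessor lies in the block,
   so apart from the vertices of the block only the centre can be forbidden. *)
Lemma forb_second x (S : seq nat) : leg_second x -> 2 <= pos x %% k ->
  (forall y, y \in F x -> block y = block x -> pos y \in S) -> #|F x| <= (size S).+1.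
Proof.
move=> /leg_second_inv [i [_ _ bx]] offx inS.
apply: (card_le_size_inj (S := pcentre :: S) pos_inj) => y /[dup] yF /forb_cases.
case=> [[b _]|[lt]]; first by rewrite inE inS ?orbT.
by rewrite bx !inE; have := earlier_block lt; have := pos_offset x; lia.
Qed.

(* In the last, incomplete block the positions beyond nverts are free. *)
Lemma forb_tail x : leg_second x -> 2 <= pos x %% k ->
  nverts < block x * k + k -> #|F x| < k.
Proof.
move=> x_sec offx tail; set s := block x * k in tail *.
apply: leq_ltn_trans (forb_second (S := rem (pos x) (iota s (nverts - s))) x_sec offx _) _.
  move=> y yF b; rewrite (mem_rem_uniq _ (iota_uniq _ _)) inE (forb_neq yF) mem_iota /=.
  by have := block_range y; have := pos_lt y; rewrite b; lia.
by rewrite size_rem ?size_iota ?mem_iota; have := pos_lt x; have := block_range x; lia.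
Qed.

(* A vertex w of the block that is coloured after x frees one more place. *)
Lemma forb_skip x w : leg_second x -> 2 <= pos x %% k ->
  block w = block x -> key x < key w -> #|F x| < k.
Proof.
move=> x_sec offx bw kxw; set s := block x * k.
have wx : pos w != pos x.
  by rewrite (inj_eq pos_inj); apply: contraTneq kxw => ->; rewrite ltnn.
have w_in : pos w \in rem (pos x) (iota s k) by apply: iota_block_rem.
apply: leq_ltn_trans (forb_second (S := rem (pos w) (rem (pos x) (iota s k))) x_sec offx _) _.
  move=> y yF b; rewrite (mem_rem_uniq _ (rem_uniq _ (iota_uniq _ _))) inE.
  rewrite iota_block_rem ?(forb_neq yF) // andbT (inj_eq pos_inj).
  apply: contraTneq yF => ->; rewrite inE negb_and -leqNgt ltnW //.
by rewrite size_rem // size_iota_block_rem; lia.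
Qed.

Lemma sorted_short_prefix (c : 'I_m) : (forall i j : 'I_m, i <= j -> l i <= l j) ->
  l c <= 2 -> psum c.+1 <= 2 * c.+1.
Proof.
by move=> sorted lc; apply: psum_short => r rc; apply: leq_trans lc; apply: sorted; lia.
Qed.

Section Witness.
Variables (c : 'I_m) (j : 'I_(l c)).
Hypotheses (c_gt1 : 1 < c) (j1 : j = 1 :> nat).
Local Notation x := (leg_vertex c j).
Hypotheses (offx : 2 <= pos x %% k) (centre_before : pcentre < block x * k).
Hypothesis full_block : block x * k + k <= nverts.

Let x_inside : block x * k + 2 <= pos x.
Proof. by move: offx; rewrite offset_eq; lia. Qed.

Let c_gt0 : nat_of_ord c != 0. Proof. by lia. Qed.
Let px : pos x = psum c + 2. Proof. by have [-> _] := pos_legS j c_gt0; rewrite j1; lia. Qed.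
Let cls_x : cls x = 1. Proof. by rewrite /cls /leg_root /leg_second /= c_gt1 j1. Qed.
Let k_le_s : k <= block x * k.
Proof. by move: centre_before; case: (block x) => [|b] /=; rewrite ?mulSn; lia. Qed.

(* If x is not the last vertex of its block, the next vertex on its leg,
   or else the second vertex of the next leg, comes after x. *)
Lemma witness_interior : (pos x).+1 < block x * k + k ->
  exists w, block w = block x /\ key x < key w.
Proof.
move=> not_last; have := block_range x; rewrite px in not_last * => rx.
case: (ltnP 2 (l c)) => [lc3|lc2].
  pose w := leg_vertex c (Ordinal lc3).
  have [pw _] := pos_legS (Ordinal lc3) c_gt0; rewrite -/w /= in pw.
  have bw : block w = block x by apply: block_of_pos; rewrite pw; lia.
  exists w; split=> //; apply: key_lt_same_block => //; left.
  rewrite cls_x /cls /leg_root /leg_second /= c_gt1 /=.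
  by rewrite offset_eq bw pw ifN // -leqNgt; have := x_inside; lia.
have lc : l c = 2 by have := ltn_ord j; lia.
have psc : psum c.+1 = psum c + 2 by rewrite psumS lc.
have cm : c.+1 < m.
  rewrite ltn_neqAle ltn_ord andbT; apply: contraTneq not_last => cm.
  have : psum m = psum c + 2 by rewrite -psc cm.
  by move: full_block; rewrite /nverts; lia.
have sorted : forall i j : 'I_m, i <= j -> l i <= l j.
  by case: leg_order => [[_ //]|[_ [m3 _]]]; lia.
pose c' : 'I_m := Ordinal cm.
have lc' : 1 < l c' by rewrite -lc; apply: sorted => /=.
case: (ltnP (pos x).+2 (block x * k + k)) => [lt2|ge2]; last first.
  by have := sorted_short_prefix sorted lc2; rewrite psc px in ge2 *; lia.
pose w := leg_vertex c' (Ordinal lc').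
have [pw _] := pos_legS (Ordinal lc') (isT : nat_of_ord c' != 0); rewrite -/w /= psc in pw.
have bw : block w = block x by apply: block_of_pos; rewrite pw; lia.
exists w; split=> //; apply: key_lt_same_block => //; right.
have w_sec : leg_second w by rewrite /leg_second /=; lia.
by rewrite cls_x /cls w_sec /leg_root /= andbF pw px; split=> //; lia.
Qed.

(* If x ends its block, then k >= 5 and the last vertex of the previous leg,
   two places before x, comes after x. *)
Lemma witness_last : (pos x).+1 = block x * k + k ->
  exists w, block w = block x /\ key x < key w.
Proof.
move=> last; case: leg_order => [[k5 sorted]|[k4 [m3 split_ok]]]; last first.
  have c2 : nat_of_ord c = 2 by have := ltn_ord c; lia.
  have start : (psum 2).+1 = block x * k + 2 by rewrite -c2; lia.
  by move: split_ok; rewrite start k4 -modnDml modnMl.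
have cm : c.-1 < m by have := ltn_ord c; lia.
pose c' : 'I_m := Ordinal cm.
have lc' : (l c').-1 < l c' by have := l_pos c'; lia.
have c'0 : nat_of_ord c' != 0 by rewrite /=; lia.
have psc : psum c = psum c.-1 + l c' by rewrite -(psumS c') /=; congr psum; lia.
pose w := leg_vertex c' (Ordinal lc').
have [pw _] := pos_legS (Ordinal lc') c'0; rewrite -/w /= in pw.
have bw : block w = block x.
  by apply: block_of_pos; rewrite pw; have := block_range x; have := l_pos c'; lia.
exists w; split=> //; apply: key_lt_same_block => //; left.
have w_plain : ~~ leg_root w && ~~ leg_second w.
  rewrite /leg_root /leg_second /=; case: (ltnP 1 c.-1) => c2 //=.
  case: (ltnP 2 (l c')) => l3; first by lia.
  have := sorted_short_prefix sorted l3.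
  by rewrite (_ : (nat_of_ord c').+1 = c) /=; [have := ltn_ord c; lia | lia].
case/andP: w_plain => /negPf w_nroot /negPf w_nsec.
rewrite cls_x /cls w_nroot w_nsec /=.
rewrite offset_eq bw pw ifN // -leqNgt.
by have := x_inside; have := l_pos c'; lia.
Qed.

End Witness.

Lemma forb_small x : #|F x| < k.
Proof.
case: (boolP (leg_root x)) => [|x_nroot]; first exact: forb_root.
case: (ltnP (pos x %% k) 2) => offx; first exact: forb_low.
have inside : block x * k + 2 <= pos x by move: offx; rewrite offset_eq; lia.
case: (boolP (leg_second x)) => x_sec; last first.
  by apply: forb_within => q; rewrite back_nbrs_plain // !inE; lia.
case: (leqP (block x * k) pcentre) => centre_before.
  apply: forb_within => q; have [i [_ _ ->]] := leg_second_inv x_sec.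
  by rewrite !inE; lia.
case: (ltnP nverts (block x * k + k)) => full; first exact: forb_tail.
case: x x_nroot offx x_sec centre_before full {inside} => [[c j]|] // _ offx x_sec.
move: (x_sec) => /andP [/= c1 /eqP /= j1] centre_before full.
have [w [bw kxw]] : exists w, block w = block (leg_vertex c j) /\ key (leg_vertex c j) < key w.
  have := block_range (leg_vertex c j); case/andP=> _.
  rewrite leq_eqVlt => /orP [/eqP last|not_last].
  - exact: witness_last c1 j1 offx centre_before full last.
  - exact: witness_interior c1 j1 offx centre_before full not_last.
exact: forb_skip x_sec offx bw kxw.
Qed.

Lemma spider_choosable : equitably_k_choosable G k.
Proof.
apply: (@block_greedy_choosable _ _ k key block (ceil_div nverts k)).
- exact/square_sym/spider_edge_sym.
- exact: square_irr.
- exact: key_inj.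
- exact: block_bound.
- by rewrite card_spider.
- exact: forb_small.
Qed.

End Blocks.

End SpiderOrder.

Section Relabel.
Variables (m : nat) (l : 'I_m -> nat) (sg : {perm 'I_m}).

Definition relabel (x : spider_vertex (l \o sg)) : spider_vertex l :=
  if x is Some p then Some (Tagged (fun i => 'I_(l i)) (tagged p : 'I_(l (sg (tag p)))))
  else None.

Lemma psum_relabel : psum (l \o sg) m = psum l m.
Proof. by rewrite !psum_total [RHS](reindex_inj (@perm_inj _ sg)). Qed.

Lemma relabel_bij : bijective relabel.
Proof.
apply: inj_card_bij; last by rewrite !card_spider /nverts psum_relabel.
move=> [[i j]|] [[i' j']|] //= [] /perm_inj eq_ii'.
move=> /(congr1 (fun p : {x : 'I_m & 'I_(l x)} => val (tagged p))) /= eq_jj'.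
by subst i'; congr Some; congr existT; apply: val_inj.
Qed.

Lemma relabel_edge a b :
  spider_edge m l (relabel a) (relabel b) = spider_edge m (l \o sg) a b.
Proof.
by case: a => [[i j]|]; case: b => [[i' j']|];
  rewrite /spider_edge /spider_edge1 //= ?(inj_eq (@perm_inj _ sg)).
Qed.

Lemma relabel_choosable k :
  equitably_k_choosable (graph_square (spider_edge m (l \o sg))) k ->
  equitably_k_choosable (graph_square (spider_edge m l)) k.
Proof.
apply: (iso_choosable relabel_bij) => a b.
exact: (iso_square relabel_bij relabel_edge).
Qed.

End Relabel.

(* With three legs, some leg can be put last so that the last leg does not
   start at the third place of a block of four: otherwise summing the three
   congruences gives 2 * psum l 3 + 3 = 2 (mod 4), impossible by parity. *)
Lemma good_last_leg (l : 'I_3 -> nat) : exists c : 'I_3, ((psum l 3).+1 - l c) %% 4 != 2.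
Proof.
pose i0 : 'I_3 := Ordinal (isT : 0 < 3); pose i1 : 'I_3 := Ordinal (isT : 1 < 3).
have := @psumS _ l i0; have := @psumS _ l i1; have := @psumS _ l ord_max.
rewrite /= psum0 => e2 e1 e0.
case: (eqVneq (((psum l 3).+1 - l i0) %% 4) 2) => h0; last by exists i0.
case: (eqVneq (((psum l 3).+1 - l i1) %% 4) 2) => h1; last by exists i1.
by exists ord_max; apply/eqP => h2; move: h0 h1 h2; lia.
Qed.

Theorem theorem2p1 (m : nat) (l : 'I_m -> nat) :
  3 <= m ->
  (forall i, 1 <= l i) ->
  (forall i j : 'I_m, i <= j -> l i <= l j) ->
  forall k, m.+1 <= k ->
    equitably_k_choosable (graph_square (@spider_edge m l)) k.
Proof.
move=> m_ge3 l_pos sorted k k_gt_m.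
case: (ltnP 4 k) => [k_gt4|k_le4]; first by apply: spider_choosable => //; left.
have [k4 m3] : k = 4 /\ m = 3 by lia.
subst k m; have [c c_ok] := good_last_leg l.
pose sg := tperm c ord_max.
apply: (@relabel_choosable 3 l sg); apply: spider_choosable => //; first by move=> i; apply: l_pos.
right; do 2!split=> //.
have := @psumS _ (l \o sg) ord_max; rewrite /= psum_relabel tpermR => split_last.
by move: c_ok; set P := psum _ 2 in split_last *; rewrite split_last; lia.
Qed.
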